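(* Assume that for any $i,j\in[1,n]$ the distance $|v_iv_j|$ can be obtained in $O(1)$ time. For $i\in[1,n]$ define $\lambda_i=\min_{j\in[i,n]}\max_{k\in[i,n]} d_{G(i,j)}(v_i,v_k)$ and let $j(i)$ be an index $j\in[i,n]$ attaining this minimum. Then there is an algorithm that computes $\lambda_i$ and $j(i)$ for all $i\in[1,n]$ in total $O(n)$ time.
   Context: Let $v_1,\dots,v_n$ be points of a metric space with metric $|\cdot|$: $|v_iv_j|=|v_jv_i|\ge 0$, $|v_iv_j|=0$ iff $i=j$, and $|v_iv_k|+|v_kv_j|\ge |v_iv_j|$. $P$ is the path graph with vertices $v_1,\dots,v_n$ and edges $e(v_k,v_{k+1})$, $k\in[1,n-1]$, where $e(v_k,v_{k+1})$ has length $|v_kv_{k+1}|$. For $1\le i\le j\le n$, $G(i,j)=P\cup\{e(v_i,v_j)\}$ is obtained from $P$ by adding an edge $e(v_i,v_j)$ of length $|v_iv_j|$ (if $j\le i+1$ then $G(i,j)=P$). For a graph $G$, $d_G(p,q)$ denotes the length of a shortest path between $p$ and $q$ in $G$. *)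

From Stdlib Require Import Reals List Arith.
Import ListNotations.
Open Scope R_scope.

(** Points v_1..v_n of a metric space are represented by their distance
    function d i j = |v_i v_j| on indices in [1,n]. *)
Definition metric_on (d : nat -> nat -> R) (n : nat) : Prop :=
  forall i j k, (1 <= i <= n)%nat -> (1 <= j <= n)%nat -> (1 <= k <= n)%nat ->
    d i j = d j i /\ 0 <= d i j /\ (d i j = 0 <-> i = j) /\
    d i k + d k j >= d i j.

(** Length of the (unique) path between v_a and v_b in the path graph P. *)
Definition pdist (d : nat -> nat -> R) (a b : nat) : R :=
  fold_right Rplus 0
    (map (fun k => d k (S k)) (seq (Nat.min a b) (Nat.max a b - Nat.min a b))).

(** Shortest-path distance d_{G(i,j)}(v_a, v_b) in G(i,j) = P + e(v_i,v_j):
    a shortest path either avoids the extra edge (then it is the path in P)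
    or uses it exactly once, in one of the two directions. *)
Definition dG (d : nat -> nat -> R) (i j a b : nat) : R :=
  Rmin (pdist d a b)
    (Rmin (pdist d a i + d i j + pdist d j b)
          (pdist d a j + d i j + pdist d i b)).

Definition ecc (d : nat -> nat -> R) (n i j : nat) : R :=
  fold_right Rmax (dG d i j i i) (map (fun k => dG d i j i k) (seq i (S n - i))).

Definition lambda (d : nat -> nat -> R) (n i : nat) : R :=
  fold_right Rmin (ecc d n i i) (map (fun j => ecc d n i j) (seq i (S n - i))).

(** Every instruction costs one step;
    in particular a distance query |v_a v_b| costs O(1). *)
Inductive instr : Type :=
  | NConst (r : nat) (k : nat)
  | NAdd (r a b : nat)
  | NSub (r a b : nat)                  (* nr[r] := nr[a] - nr[b] (truncated) *)
  | NLoad (r a : nat)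
  | NStore (a r : nat)
  | RZero (r : nat)
  | RAdd (r a b : nat)
  | RSub (r a b : nat)
  | RLoad (r a : nat)
  | RStore (a r : nat)
  | Dist (r a b : nat)
  | JLeN (a b l : nat)
  | JLeR (a b l : nat)
  | Jmp (l : nat)
  | Halt.

Record config : Type := Config {
  pc : nat;
  nr : nat -> nat;
  rr : nat -> R;
  nm : nat -> nat;
  rm : nat -> R }.

Definition upd {A : Type} (f : nat -> A) (k : nat) (v : A) : nat -> A :=
  fun x => if Nat.eqb x k then v else f x.

Definition step (P : list instr) (d : nat -> nat -> R) (c : config) : option config :=
  let '(Config p n1 r1 n2 r2) := c in
  match nth_error P p with
  | None => None
  | Some Halt => None
  | Some (NConst r k) => Some (Config (S p) (upd n1 r k) r1 n2 r2)
  | Some (NAdd r a b) => Some (Config (S p) (upd n1 r (n1 a + n1 b)%nat) r1 n2 r2)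
  | Some (NSub r a b) => Some (Config (S p) (upd n1 r (n1 a - n1 b)%nat) r1 n2 r2)
  | Some (NLoad r a) => Some (Config (S p) (upd n1 r (n2 (n1 a))) r1 n2 r2)
  | Some (NStore a r) => Some (Config (S p) n1 r1 (upd n2 (n1 a) (n1 r)) r2)
  | Some (RZero r) => Some (Config (S p) n1 (upd r1 r 0) n2 r2)
  | Some (RAdd r a b) => Some (Config (S p) n1 (upd r1 r (r1 a + r1 b)) n2 r2)
  | Some (RSub r a b) => Some (Config (S p) n1 (upd r1 r (r1 a - r1 b)) n2 r2)
  | Some (RLoad r a) => Some (Config (S p) n1 (upd r1 r (r2 (n1 a))) n2 r2)
  | Some (RStore a r) => Some (Config (S p) n1 r1 n2 (upd r2 (n1 a) (r1 r)))
  | Some (Dist r a b) => Some (Config (S p) n1 (upd r1 r (d (n1 a) (n1 b))) n2 r2)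
  | Some (JLeN a b l) =>
      Some (Config (if Nat.leb (n1 a) (n1 b) then l else S p) n1 r1 n2 r2)
  | Some (JLeR a b l) =>
      Some (Config (if Rle_dec (r1 a) (r1 b) then l else S p) n1 r1 n2 r2)
  | Some (Jmp l) => Some (Config l n1 r1 n2 r2)
  end.

(** [run P d t c = Some c'] iff the machine started in [c] halts within at
    most [t] steps, in the final configuration [c']. *)
Fixpoint run (P : list instr) (d : nat -> nat -> R) (t : nat) (c : config)
  : option config :=
  match step P d c with
  | None => Some c
  | Some c1 => match t with
               | O => None
               | S t' => run P d t' c1
               end
  end.

Definition init (n : nat) : config :=
  Config 0 (upd (fun _ => 0%nat) 0 n) (fun _ => 0) (fun _ => 0%nat) (fun _ => 0).

(* Let p_k = [prefix d k] be the position of v_k along P.  For i <= j and i <= k,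
   the distance from v_i to v_k in G(i,j) is min(p_k - p_i, |v_i v_j| + |p_k - p_j|).
   Beyond v_j its maximum is attained at v_n and equals A(i,j) = |v_i v_j| + p_n - p_j
   ([tail_dist]); on the cycle v_i..v_j it is a value B(i,j) ([cycle_max]) attained next
   to the antipode of v_i, the last k with 2 p_k <= p_i + p_j + |v_i v_j|, so the
   eccentricity is max(A, B).  A is nonincreasing and B nondecreasing in j, hence if j0
   is the first j with A <= B, then lambda_i = B(i,i) when j0 = i and
   lambda_i = min(B(i,j0), A(i,j0-1)) otherwise.  By the triangle inequality both j0 and
   the antipode are nondecreasing in i, so two pointers that only move right find all of
   them in O(n) steps; the program keeps the positions p at i, j and the antipode in
   registers instead of tabulating them. *)

From Stdlib Require Import Reals List Arith Lra Lia.
Import ListNotations.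
Open Scope R_scope.

Ltac splitall := repeat match goal with |- _ /\ _ => split end.

Ltac minmax_cases := unfold Rmin, Rmax in *; repeat destruct Rle_dec; try lra.

Lemma fold_Rmax_ge {A : Type} (f : A -> R) b l x :
  In x l -> f x <= fold_right Rmax b (map f l).
Proof.
  induction l as [|y l IH]; simpl; [tauto|]. intros [<-|Hx].
  - apply Rmax_l.
  - eapply Rle_trans; [apply IH; auto | apply Rmax_r].
Qed.

Lemma fold_Rmax_lub {A : Type} (f : A -> R) b l V :
  (forall x, In x l -> f x <= V) -> b <= V -> fold_right Rmax b (map f l) <= V.
Proof. induction l; simpl; auto. intros Hl Hb. apply Rmax_lub; auto. Qed.

Lemma fold_Rmin_le {A : Type} (f : A -> R) b l x :
  In x l -> fold_right Rmin b (map f l) <= f x.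
Proof.
  induction l as [|y l IH]; simpl; [tauto|]. intros [<-|Hx].
  - apply Rmin_l.
  - eapply Rle_trans; [apply Rmin_r | apply IH; auto].
Qed.

Lemma fold_Rmin_glb {A : Type} (f : A -> R) b l V :
  (forall x, In x l -> V <= f x) -> V <= b -> V <= fold_right Rmin b (map f l).
Proof. induction l; simpl; auto. intros Hl Hb. apply Rmin_glb; auto. Qed.

Lemma fold_Rplus_app (l1 l2 : list R) :
  fold_right Rplus 0 (l1 ++ l2) = fold_right Rplus 0 l1 + fold_right Rplus 0 l2.
Proof. induction l1; simpl; lra. Qed.

Definition prefix (d : nat -> nat -> R) (k : nat) : R := pdist d 1 k.

Lemma pdist_sym d a b : pdist d a b = pdist d b a.
Proof. unfold pdist; rewrite Nat.min_comm, Nat.max_comm; reflexivity. Qed.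

Lemma pdist_diag d a : pdist d a a = 0.
Proof. unfold pdist; rewrite Nat.min_id, Nat.max_id, Nat.sub_diag; reflexivity. Qed.

Lemma pdist_ordered d a b : (a <= b)%nat ->
  pdist d a b = fold_right Rplus 0 (map (fun k => d k (S k)) (seq a (b - a))).
Proof. intros; unfold pdist; rewrite Nat.min_l, Nat.max_r by lia; reflexivity. Qed.

Lemma pdist_prefix d a b : (1 <= a <= b)%nat -> pdist d a b = prefix d b - prefix d a.
Proof.
  intros. unfold prefix. rewrite !pdist_ordered by lia.
  replace (b - 1)%nat with ((a - 1) + (b - a))%nat by lia.
  rewrite seq_app, map_app, fold_Rplus_app. replace (1 + (a - 1))%nat with a by lia. lra.
Qed.

Lemma prefix_succ d k : (1 <= k)%nat -> prefix d (S k) = prefix d k + d k (S k).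
Proof.
  intros. pose proof (pdist_prefix d k (S k) ltac:(lia)) as E.
  rewrite pdist_ordered, Nat.sub_succ_l, Nat.sub_diag in E by lia. simpl in E. lra.
Qed.

Section Metric.

Variables (d : nat -> nat -> R) (n : nat).
Hypothesis metric : metric_on d n.

Lemma d_sym i j : (1 <= i <= n)%nat -> (1 <= j <= n)%nat -> d i j = d j i.
Proof. intros. apply (metric i j i); auto. Qed.

Lemma d_ge0 i j : (1 <= i <= n)%nat -> (1 <= j <= n)%nat -> 0 <= d i j.
Proof. intros. apply (metric i j i); auto. Qed.

Lemma d_diag i : (1 <= i <= n)%nat -> d i i = 0.
Proof. intros. apply (metric i i i); auto. Qed.

Lemma d_triangle i j k : (1 <= i <= n)%nat -> (1 <= j <= n)%nat -> (1 <= k <= n)%nat ->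
  d i j <= d i k + d k j.
Proof. intros. destruct (metric i j k) as (_ & _ & _ & Htri); auto; lra. Qed.

Lemma d_le_prefix a b : (1 <= a <= b)%nat -> (b <= n)%nat ->
  d a b <= prefix d b - prefix d a.
Proof.
  intros Hab Hbn. induction b as [|b IH]; [lia|].
  destruct (Nat.eq_dec a (S b)) as [<-|Ha]; [rewrite d_diag by lia; lra|].
  rewrite prefix_succ by lia.
  pose proof (d_triangle a (S b) b ltac:(lia) ltac:(lia) ltac:(lia)).
  specialize (IH ltac:(lia) ltac:(lia)). lra.
Qed.

Lemma prefix_mono a b : (1 <= a <= b)%nat -> (b <= n)%nat -> prefix d a <= prefix d b.
Proof.
  intros. pose proof (d_le_prefix a b ltac:(lia) ltac:(lia)).
  pose proof (d_ge0 a b ltac:(lia) ltac:(lia)). lra.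
Qed.

Lemma pdist_ge0 a b : (1 <= a <= n)%nat -> (1 <= b <= n)%nat -> 0 <= pdist d a b.
Proof.
  intros. destruct (Nat.le_ge_cases a b); [|rewrite pdist_sym]; rewrite pdist_prefix by lia.
  - pose proof (prefix_mono a b ltac:(lia) ltac:(lia)). lra.
  - pose proof (prefix_mono b a ltac:(lia) ltac:(lia)). lra.
Qed.

Definition dG_from (i j k : nat) : R := Rmin (pdist d i k) (d i j + pdist d j k).

Lemma dG_src_eq i j k : (1 <= i <= n)%nat -> (1 <= j <= n)%nat -> (1 <= k <= n)%nat ->
  dG d i j i k = dG_from i j k.
Proof.
  intros. unfold dG, dG_from. rewrite pdist_diag, Rplus_0_l.
  pose proof (pdist_ge0 i j ltac:(lia) ltac:(lia)). pose proof (d_ge0 i j ltac:(lia) ltac:(lia)).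
  pose proof (pdist_ge0 i k ltac:(lia) ltac:(lia)). minmax_cases.
Qed.

Lemma dG_from_inside i j k : (1 <= i)%nat -> (i <= k <= j)%nat ->
  dG_from i j k = Rmin (prefix d k - prefix d i) (d i j + (prefix d j - prefix d k)).
Proof. intros. unfold dG_from. rewrite (pdist_sym d j k), !pdist_prefix by lia. reflexivity. Qed.

Lemma dG_from_beyond i j k : (1 <= i)%nat -> (i <= j <= k)%nat ->
  dG_from i j k = Rmin (prefix d k - prefix d i) (d i j + (prefix d k - prefix d j)).
Proof. intros. unfold dG_from. rewrite !pdist_prefix by lia. reflexivity. Qed.

Definition cycle_max (i j : nat) (B : R) : Prop :=
  (forall k, (i <= k <= j)%nat -> dG_from i j k <= B) /\
  exists k, (i <= k <= j)%nat /\ dG_from i j k = B.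

Definition tail_dist (i j : nat) : R := d i j + prefix d n - prefix d j.

Definition tail_dominates (i j : nat) : Prop :=
  forall k, (i <= k <= j)%nat -> dG_from i j k < tail_dist i j.

(** For [i <= k <= j], v_k is reached from v_i at least as fast along P as
    through the edge e(v_i,v_j) iff [2 * prefix d k <= antipode2 i j]. *)
Definition antipode2 (i j : nat) : R := prefix d i + prefix d j + d i j.

Lemma antipode_ge_src i j kk : (1 <= kk)%nat -> (1 <= i <= j)%nat -> (j <= n)%nat ->
  ~ prefix d (S kk) + prefix d (S kk) <= antipode2 i j -> (i <= kk)%nat.
Proof.
  intros Hkk Hij Hjn Hmid. destruct (le_lt_dec i kk); auto. exfalso; apply Hmid.
  unfold antipode2. pose proof (prefix_mono (S kk) i ltac:(lia) ltac:(lia)).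
  pose proof (prefix_mono i j ltac:(lia) ltac:(lia)). pose proof (d_ge0 i j ltac:(lia) ltac:(lia)).
  lra.
Qed.

Lemma cycle_max_end i j : (1 <= i <= j)%nat -> (j <= n)%nat ->
  prefix d j + prefix d j <= antipode2 i j -> cycle_max i j (prefix d j - prefix d i).
Proof.
  unfold antipode2. intros Hij Hjn Hmid. split.
  - intros k Hk. rewrite dG_from_inside by lia.
    pose proof (prefix_mono k j ltac:(lia) ltac:(lia)). minmax_cases.
  - exists j. split; [lia|]. rewrite dG_from_inside by lia. minmax_cases.
Qed.

Lemma cycle_max_antipode i j kk : (1 <= i <= kk)%nat -> (kk < j <= n)%nat ->
  prefix d kk + prefix d kk <= antipode2 i j ->
  ~ prefix d (S kk) + prefix d (S kk) <= antipode2 i j ->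
  cycle_max i j (Rmax (prefix d kk - prefix d i) (d i j + prefix d j - prefix d (S kk))).
Proof.
  unfold antipode2. intros Hik Hkj Hin Hout. split.
  - intros k Hk. rewrite dG_from_inside by lia. destruct (le_lt_dec k kk).
    + pose proof (prefix_mono k kk ltac:(lia) ltac:(lia)). minmax_cases.
    + pose proof (prefix_mono (S kk) k ltac:(lia) ltac:(lia)). minmax_cases.
  - destruct (Rle_dec (d i j + prefix d j - prefix d (S kk)) (prefix d kk - prefix d i)).
    + exists kk. split; [lia|]. rewrite dG_from_inside by lia. minmax_cases.
    + exists (S kk). split; [lia|]. rewrite dG_from_inside by lia. minmax_cases.
Qed.

Lemma tail_dominates_of_lt i j B : (1 <= i <= j)%nat -> (j <= n)%nat -> cycle_max i j B ->
  B < tail_dist i j -> tail_dominates i j /\ (j < n)%nat.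
Proof.
  intros Hij Hjn [HB _] HA. split.
  - intros k Hk. specialize (HB k Hk). lra.
  - destruct (Nat.eq_dec j n) as [->|]; [|lia]. exfalso.
    specialize (HB n ltac:(lia)). rewrite dG_from_beyond in HB by lia.
    pose proof (d_le_prefix i n ltac:(lia) ltac:(lia)). unfold tail_dist in HA. minmax_cases.
Qed.

Lemma tail_dominates_shift i i' j : (1 <= i <= i')%nat -> (i' <= j <= n)%nat ->
  tail_dominates i j -> tail_dominates i' j.
Proof.
  intros Hii' Hjn HT k Hk. specialize (HT k ltac:(lia)).
  rewrite dG_from_inside in * by lia. unfold tail_dist in *.
  pose proof (d_triangle i j i' ltac:(lia) ltac:(lia) ltac:(lia)).
  pose proof (d_le_prefix i i' ltac:(lia) ltac:(lia)). minmax_cases.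
Qed.

Lemma antipode2_succ_r i j : (1 <= i <= j)%nat -> (S j <= n)%nat ->
  antipode2 i j <= antipode2 i (S j).
Proof.
  intros. unfold antipode2. rewrite prefix_succ by lia.
  pose proof (d_triangle i j (S j) ltac:(lia) ltac:(lia) ltac:(lia)).
  rewrite (d_sym (S j) j) in * by lia. lra.
Qed.

Lemma antipode2_succ_l i j : (1 <= i)%nat -> (S i <= j <= n)%nat ->
  antipode2 i j <= antipode2 (S i) j.
Proof.
  intros. unfold antipode2. rewrite prefix_succ by lia.
  pose proof (d_triangle i j (S i) ltac:(lia) ltac:(lia) ltac:(lia)). lra.
Qed.

Lemma antipode2_diag_ge i kk : (1 <= kk <= i)%nat -> (i <= n)%nat ->
  prefix d kk + prefix d kk <= antipode2 i i.
Proof.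
  intros. unfold antipode2. rewrite d_diag by lia.
  pose proof (prefix_mono kk i ltac:(lia) ltac:(lia)). lra.
Qed.

Lemma dG_from_le_ecc i j k : (1 <= i <= k)%nat -> (k <= n)%nat -> (i <= j <= n)%nat ->
  dG_from i j k <= ecc d n i j.
Proof.
  intros. unfold ecc. rewrite <- dG_src_eq by lia.
  apply (fold_Rmax_ge (fun k => dG d i j i k)), in_seq. lia.
Qed.

Lemma ecc_le i j V : (1 <= i <= j)%nat -> (j <= n)%nat ->
  (forall k, (i <= k <= n)%nat -> dG_from i j k <= V) -> ecc d n i j <= V.
Proof.
  intros Hij Hjn HV. unfold ecc. apply fold_Rmax_lub.
  - intros x Hx. apply in_seq in Hx. rewrite dG_src_eq by lia. apply HV; lia.
  - rewrite dG_src_eq by lia. apply HV; lia.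
Qed.

Lemma tail_le_ecc i j : (1 <= i <= j)%nat -> (j <= n)%nat -> tail_dist i j <= ecc d n i j.
Proof.
  intros. eapply Rle_trans; [|apply (dG_from_le_ecc i j n); lia].
  rewrite dG_from_beyond by lia. pose proof (d_le_prefix i j ltac:(lia) ltac:(lia)).
  unfold tail_dist. minmax_cases.
Qed.

Lemma dG_from_beyond_le_tail i j k : (1 <= i <= j)%nat -> (j <= k <= n)%nat ->
  dG_from i j k <= tail_dist i j.
Proof.
  intros. rewrite dG_from_beyond by lia. pose proof (prefix_mono k n ltac:(lia) ltac:(lia)).
  unfold tail_dist. minmax_cases.
Qed.

Lemma ecc_eq_cycle_max i j B : (1 <= i <= j)%nat -> (j <= n)%nat -> cycle_max i j B ->
  tail_dist i j <= B -> ecc d n i j = B.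
Proof.
  intros Hij Hjn [HB [k0 [Hk0 <-]]] HA. apply Rle_antisym.
  - apply ecc_le; auto. intros k Hk. destruct (le_lt_dec k j).
    + apply HB; lia.
    + pose proof (dG_from_beyond_le_tail i j k ltac:(lia) ltac:(lia)). lra.
  - apply dG_from_le_ecc; lia.
Qed.

Lemma ecc_eq_tail i j : (1 <= i <= j)%nat -> (j <= n)%nat -> tail_dominates i j ->
  ecc d n i j = tail_dist i j.
Proof.
  intros Hij Hjn HT. apply Rle_antisym; [|apply tail_le_ecc; auto].
  apply ecc_le; auto. intros k Hk. destruct (le_lt_dec k j).
  - apply Rlt_le, HT; lia.
  - apply dG_from_beyond_le_tail; lia.
Qed.

Lemma tail_dist_antimono i j j' : (1 <= i <= j)%nat -> (j <= j' <= n)%nat ->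
  tail_dist i j' <= tail_dist i j.
Proof.
  intros. unfold tail_dist. pose proof (d_triangle i j' j ltac:(lia) ltac:(lia) ltac:(lia)).
  pose proof (d_le_prefix j j' ltac:(lia) ltac:(lia)). lra.
Qed.

Lemma cycle_max_le_ecc i j j' B : (1 <= i <= j)%nat -> (j <= j' <= n)%nat -> cycle_max i j B ->
  B <= ecc d n i j'.
Proof.
  intros Hij Hj' [_ [k0 [Hk0 <-]]]. eapply Rle_trans; [|apply (dG_from_le_ecc i j' k0); lia].
  rewrite !dG_from_inside by lia.
  pose proof (d_triangle i j j' ltac:(lia) ltac:(lia) ltac:(lia)).
  pose proof (d_le_prefix j j' ltac:(lia) ltac:(lia)). rewrite (d_sym j' j) in * by lia.
  minmax_cases.
Qed.

Lemma lambda_eq_cycle_max i B : (1 <= i <= n)%nat -> cycle_max i i B -> tail_dist i i <= B ->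
  lambda d n i = B /\ ecc d n i i = B.
Proof.
  intros Hi HB HA. assert (E : ecc d n i i = B) by (apply ecc_eq_cycle_max; auto; lia).
  split; auto. unfold lambda. apply Rle_antisym.
  - rewrite <- E. apply fold_Rmin_le, in_seq. lia.
  - apply fold_Rmin_glb; [|rewrite E; apply Rle_refl].
    intros x Hx. apply in_seq in Hx. apply (cycle_max_le_ecc i i x B); auto; lia.
Qed.

Lemma lambda_eq_min i js B : (1 <= i < js)%nat -> (js <= n)%nat -> cycle_max i js B ->
  tail_dist i js <= B -> (forall j, (i <= j < js)%nat -> tail_dominates i j) ->
  lambda d n i = Rmin B (tail_dist i (js - 1)) /\ ecc d n i js = B /\
  ecc d n i (js - 1) = tail_dist i (js - 1).
Proof.
  intros Hij Hjn HB HA HT.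
  assert (E1 : ecc d n i js = B) by (apply ecc_eq_cycle_max; auto; lia).
  assert (E2 : ecc d n i (js - 1) = tail_dist i (js - 1)) by (apply ecc_eq_tail, HT; lia).
  assert (Hlow : forall j, (i <= j <= n)%nat -> Rmin B (tail_dist i (js - 1)) <= ecc d n i j).
  { intros j Hj. destruct (le_lt_dec js j).
    - eapply Rle_trans; [apply Rmin_l | apply (cycle_max_le_ecc i js); auto; lia].
    - eapply Rle_trans; [apply Rmin_r|].
      eapply Rle_trans; [apply (tail_dist_antimono i j); lia | apply tail_le_ecc; lia]. }
  splitall; auto. unfold lambda. apply Rle_antisym.
  - apply Rmin_glb; [rewrite <- E1 | rewrite <- E2]; apply fold_Rmin_le, in_seq; lia.
  - apply fold_Rmin_glb; [intros x Hx; apply in_seq in Hx|]; apply Hlow; lia.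
Qed.

End Metric.

Section Execution.

Variables (P : list instr) (d : nat -> nat -> R).

Fixpoint exec (m : nat) (c : config) : option config :=
  match m with
  | O => Some c
  | S m' => match step P d c with None => None | Some c1 => exec m' c1 end
  end.

Lemma exec_add m1 m2 c c1 : exec m1 c = Some c1 -> exec (m1 + m2) c = exec m2 c1.
Proof.
  revert c; induction m1; intros c H; simpl in *; [congruence|].
  destruct (step P d c); [auto | discriminate].
Qed.

Lemma run_exec m t c c' : exec m c = Some c' -> run P d (m + t) c = run P d t c'.
Proof.
  revert c; induction m; intros c H; simpl in *; [congruence|].
  destruct (step P d c); [auto | discriminate].
Qed.

Lemma run_halted t c : step P d c = None -> run P d t c = Some c.
Proof. intros H. destruct t; cbn [run]; rewrite H; reflexivity. Qed.

Definition reach (c : config) (Q : nat -> config -> Prop) : Prop :=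
  exists m c', exec m c = Some c' /\ Q m c'.

Lemma reach_done c (Q : nat -> config -> Prop) : Q 0%nat c -> reach c Q.
Proof. intros; exists 0%nat, c; auto. Qed.

Lemma reach_step c c1 Q :
  step P d c = Some c1 -> reach c1 (fun m c' => Q (S m) c') -> reach c Q.
Proof. intros H [m [c' [H1 H2]]]. exists (S m), c'. simpl. rewrite H. auto. Qed.

Lemma reach_trans c Q1 Q : reach c Q1 ->
  (forall m c', Q1 m c' -> reach c' (fun m2 c'' => Q (m + m2)%nat c'')) -> reach c Q.
Proof.
  intros [m [c' [H1 H2]]] H. destruct (H m c' H2) as [m2 [c'' [H3 H4]]].
  exists (m + m2)%nat, c''. rewrite (exec_add _ _ _ _ H1). auto.
Qed.

Lemma reach_mono c (Q1 Q2 : nat -> config -> Prop) :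
  reach c Q1 -> (forall m c', Q1 m c' -> Q2 m c') -> reach c Q2.
Proof. intros [m [c' [H1 H2]]] H. exists m, c'. auto. Qed.

Lemma reach_jlen p n1 r1 n2 r2 a b l Q : nth_error P p = Some (JLeN a b l) ->
  ((n1 a <= n1 b)%nat -> reach (Config l n1 r1 n2 r2) (fun m c' => Q (S m) c')) ->
  ((n1 b < n1 a)%nat -> reach (Config (S p) n1 r1 n2 r2) (fun m c' => Q (S m) c')) ->
  reach (Config p n1 r1 n2 r2) Q.
Proof.
  intros E H1 H2. destruct (Nat.leb (n1 a) (n1 b)) eqn:Hab.
  - eapply reach_step; [|apply H1, Nat.leb_le; auto]. simpl. rewrite E, Hab. reflexivity.
  - eapply reach_step; [|apply H2, Nat.leb_gt; auto]. simpl. rewrite E, Hab. reflexivity.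
Qed.

Lemma reach_jler p n1 r1 n2 r2 a b l Q : nth_error P p = Some (JLeR a b l) ->
  (r1 a <= r1 b -> reach (Config l n1 r1 n2 r2) (fun m c' => Q (S m) c')) ->
  (~ r1 a <= r1 b -> reach (Config (S p) n1 r1 n2 r2) (fun m c' => Q (S m) c')) ->
  reach (Config p n1 r1 n2 r2) Q.
Proof.
  intros E H1 H2. destruct (Rle_dec (r1 a) (r1 b)) as [Hab|Hab] eqn:Edec.
  - eapply reach_step; [|apply H1; auto]. simpl. rewrite E, Edec. reflexivity.
  - eapply reach_step; [|apply H2; auto]. simpl. rewrite E, Edec. reflexivity.
Qed.

End Execution.

(** Nat registers: 0 = n, 1 = i, 2 = j, 3 = kk (the last
    vertex of the cycle v_i..v_j not beyond its antipode), 4 = the constant 1,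
    5 = scratch, 6 = counter of the first loop.  Real registers: 0, 1, 2 hold
    [prefix] at i, j, kk and 3 at n; 4 = |v_i v_j|, 5 = [antipode2 i j],
    6 = [prefix] at kk+1, 8 = the candidate value of lambda_i, the others are
    scratch.  Memory cell i receives lambda_i (real) and j(i) (nat). *)
Definition prog : list instr := [
 (*0*) NConst 4 1; NConst 6 1; RZero 3;
 (*3*) JLeN 0 6 9; NAdd 5 6 4; Dist 10 6 5; RAdd 3 3 10; NAdd 6 6 4; Jmp 3;
 (*9*) NConst 1 1; NConst 2 1; NConst 3 1; RZero 0; RZero 1; RZero 2;
 (*15*) JLeN 1 0 17; Halt;
 (*17*) JLeN 1 2 22; NAdd 5 2 4; Dist 10 2 5; RAdd 1 1 10; NAdd 2 2 4;
 (*22*) Dist 4 1 2; RAdd 5 0 1; RAdd 5 5 4;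
 (*25*) JLeN 2 3 35; NAdd 5 3 4; Dist 10 3 5; RAdd 6 2 10; RAdd 7 6 6; JLeR 7 5 32; Jmp 37;
 (*32*) NAdd 3 3 4; RAdd 2 2 10; Jmp 25;
 (*35*) RSub 8 1 0; Jmp 43;
 (*37*) RSub 8 2 0; RAdd 7 4 1; RSub 7 7 6; JLeR 7 8 43; RAdd 8 4 1; RSub 8 8 6;
 (*43*) RAdd 9 4 3; RSub 9 9 1; JLeR 9 8 51;
 (*46*) NAdd 5 2 4; Dist 10 2 5; RAdd 1 1 10; NAdd 2 2 4; Jmp 22;
 (*51*) JLeN 2 1 62; NSub 5 2 4; Dist 10 1 5; Dist 7 5 2; RSub 12 1 7; RAdd 10 10 3; RSub 10 10 12;
 (*58*) JLeR 8 10 62; RStore 1 10; NStore 1 5; Jmp 64;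
 (*62*) RStore 1 8; NStore 1 2;
 (*64*) NAdd 5 1 4; Dist 10 1 5; RAdd 0 0 10; NAdd 1 1 4; Jmp 15 ].

Ltac simpl_upd := cbv beta; unfold upd in *; cbn [Nat.eqb] in *.

Ltac exec_step := cbv beta;
  first [ eapply reach_jlen; [reflexivity | intro; simpl_upd | intro; simpl_upd]
        | eapply reach_jler; [reflexivity | intro; simpl_upd | intro; simpl_upd]
        | eapply reach_step; [reflexivity | simpl_upd] ].

Section Correctness.

Variables (d : nat -> nat -> R) (n : nat).
Hypothesis metric : metric_on d n.

Definition regs i j kk (nreg : nat -> nat) (rreg : nat -> R) : Prop :=
  nreg 0%nat = n /\ nreg 1%nat = i /\ nreg 2%nat = j /\ nreg 3%nat = kk /\ nreg 4%nat = 1%nat /\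
  rreg 0%nat = prefix d i /\ rreg 1%nat = prefix d j /\ rreg 2%nat = prefix d kk /\
  rreg 3%nat = prefix d n.

Definition pointers_ok i j kk : Prop :=
  (1 <= i <= j)%nat /\ (j <= n)%nat /\ (1 <= kk <= j)%nat /\
  prefix d kk + prefix d kk <= antipode2 d i j.

Definition lambda_stored i (nmem : nat -> nat) (rmem : nat -> R) : Prop :=
  forall i', (1 <= i' < i)%nat ->
    rmem i' = lambda d n i' /\ (i' <= nmem i' <= n)%nat /\ ecc d n i' (nmem i') = lambda d n i'.

Lemma lambda_stored_succ i nmem rmem J :
  lambda_stored i nmem rmem -> (i <= J <= n)%nat -> ecc d n i J = lambda d n i ->
  lambda_stored (S i) (upd nmem i J) (upd rmem i (lambda d n i)).
Proof.
  intros Hst HJ HE i' Hi'. unfold upd. destruct (Nat.eqb_spec i' i) as [->|]; auto.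
  apply Hst; lia.
Qed.

Lemma prefix_loop_spec : forall k t n1 r1 n2 r2,
  k = (Nat.max n 1 - t)%nat -> n1 0%nat = n -> n1 4%nat = 1%nat -> n1 6%nat = t ->
  (1 <= t <= Nat.max n 1)%nat -> r1 3%nat = prefix d t ->
  reach prog d (Config 3 n1 r1 n2 r2) (fun m c' => pc c' = 9%nat /\ (m <= 6 * k + 1)%nat /\
     nr c' 0 = n /\ nr c' 4 = 1%nat /\ ((1 <= n)%nat -> rr c' 3 = prefix d n)).
Proof.
  induction k; intros t n1 r1 n2 r2 Hk H0 H4 H6 Ht R3.
  - exec_step; [|lia]. apply reach_done. simpl. splitall; auto; try lia.
    intros. replace n with t by lia. auto.
  - exec_step; [apply reach_done; simpl; lia|].
    do 5 exec_step. eapply reach_mono.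
    { apply (IHk (S t)); simpl_upd; try lia. rewrite R3, H6, H4, Nat.add_1_r, prefix_succ by lia.
      reflexivity. }
    intros m c' (Hp & Hs & Ha & Hb & Hc). splitall; auto; lia.
Qed.

Definition antipode_found i j kk m c' : Prop :=
  pc c' = 43%nat /\ rr c' 4 = d i j /\
  exists kk', regs i j kk' (nr c') (rr c') /\ (kk <= kk' <= j)%nat /\
    prefix d kk' + prefix d kk' <= antipode2 d i j /\ cycle_max d i j (rr c' 8) /\
    (m <= 10 * (kk' - kk) + 20)%nat.

Lemma antipode_loop_spec i j : forall k kk n1 r1 n2 r2,
  k = (j - kk)%nat -> regs i j kk n1 r1 -> pointers_ok i j kk ->
  r1 4%nat = d i j -> r1 5%nat = antipode2 d i j ->
  reach prog d (Config 25 n1 r1 n2 r2)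
    (fun m c' => nm c' = n2 /\ rm c' = r2 /\ antipode_found i j kk m c').
Proof.
  induction k; intros kk n1 r1 n2 r2 Hk (H0&H1&H2&H3&H4&R0&R1&R2&R3) (Hij&Hjn&Hkk&Hmid) R4 R5.
  - assert (E : kk = j) by lia. rewrite E in *.
    exec_step; [|lia]. do 2 exec_step. apply reach_done. unfold antipode_found, regs; simpl.
    splitall; auto. exists j. splitall; auto; try lia.
    rewrite R1, R0. apply (cycle_max_end d n metric); auto.
  - exec_step; [lia|]. do 5 exec_step.
    + do 3 exec_step. eapply reach_mono.
      { apply (IHk (S kk)); try (unfold regs, pointers_ok; simpl_upd; splitall); auto; try lia;
          rewrite ?H3, ?H4, ?R2, ?Nat.add_1_r, ?prefix_succ in * by lia; auto; lra. }
      intros m c' (Hn & Hr & Hp & Hd & kk' & Hregs & Hkk' & Hmid' & HB & Hsteps).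
      unfold antipode_found. splitall; auto. exists kk'. splitall; auto; lia.
    + rewrite ?H0, ?H1, ?H2, ?H3, ?H4, ?R0, ?R1, ?R2, ?R3, ?R4, ?R5, ?Nat.add_1_r in *.
      rewrite <- prefix_succ in * by lia.
      assert (Hik : (i <= kk)%nat) by (apply (antipode_ge_src d n metric i j kk); auto; lia).
      pose proof (cycle_max_antipode d n metric i j kk ltac:(lia) ltac:(lia) Hmid H5) as HB.
      do 5 exec_step; rewrite ?R0, ?R1, ?R2, ?R4 in *.
      * rewrite Rmax_left in HB by lra.
        apply reach_done. unfold antipode_found, regs; simpl. splitall; auto.
        exists kk. splitall; auto; lia.
      * rewrite Rmax_right in HB by lra.
        do 2 exec_step. rewrite R1, R4. apply reach_done. unfold antipode_found, regs; simpl.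
        splitall; auto. exists kk. splitall; auto; lia.
Qed.

Definition search_found i j kk m c' : Prop :=
  pc c' = 51%nat /\
  exists js kk', regs i js kk' (nr c') (rr c') /\ pointers_ok i js kk' /\
    (j <= js)%nat /\ (kk <= kk')%nat /\
    cycle_max d i js (rr c' 8) /\ tail_dist d n i js <= rr c' 8 /\
    (forall j', (i <= j' < js)%nat -> tail_dominates d n i j') /\
    (m <= 40 * (js - j) + 10 * (kk' - kk) + 40)%nat.

Lemma search_loop_spec i : forall k j kk n1 r1 n2 r2,
  k = (n - j)%nat -> regs i j kk n1 r1 -> pointers_ok i j kk ->
  (forall j', (i <= j' < j)%nat -> tail_dominates d n i j') ->
  reach prog d (Config 22 n1 r1 n2 r2)
    (fun m c' => nm c' = n2 /\ rm c' = r2 /\ search_found i j kk m c').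
Proof.
  intros k; induction k as [k IH] using lt_wf_ind.
  intros j kk n1 r1 n2 r2 Hk Hregs Hptr HT.
  pose proof Hregs as (H0&H1&H2&H3&H4&R0&R1&R2&R3).
  pose proof Hptr as (Hij&Hjn&Hkk&_).
  do 3 exec_step. eapply reach_trans.
  { apply (antipode_loop_spec i j (j - kk) kk); try (unfold regs; simpl_upd; splitall);
      auto; rewrite ?H1, ?H2, ?R0, ?R1; unfold antipode2; reflexivity. }
  intros m [p' n1' r1' n2' r2'] (Hn & Hr & Hp & Hd & kk' & Hregs' & Hkk' & Hmid & HB & Hsteps).
  cbn [pc nr rr nm rm] in *. subst p' n2' r2'.
  pose proof Hregs' as (H0'&H1'&H2'&H3'&H4'&R0'&R1'&R2'&R3').
  do 3 exec_step; rewrite ?Hd, ?R1', ?R3' in *.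
  - apply reach_done. unfold search_found, tail_dist, pointers_ok. splitall; auto.
    exists j, kk'. splitall; auto; lia.
  - destruct (tail_dominates_of_lt d n metric i j (r1' 8%nat)) as [HTj Hjn']; try apply Hptr; auto.
    { unfold tail_dist. lra. }
    do 5 exec_step. eapply reach_trans.
    { apply (IH (n - S j)%nat ltac:(lia) (S j) kk');
        try (unfold regs, pointers_ok; simpl_upd; splitall);
        auto; try lia; rewrite ?H2', ?H4', ?R1', ?Nat.add_1_r, ?prefix_succ by lia; auto.
      - pose proof (antipode2_succ_r d n metric i j ltac:(lia) ltac:(lia)). lra.
      - intros j' Hj'. destruct (Nat.eq_dec j' j) as [->|]; auto. apply HT; lia. }
    intros m2 c2 (Hn2 & Hr2 & Hp2 & js & kk2 & Hregs2 & Hptr2 & Hjs & Hkk2 & HB2 & HA2 & HT2 & Hs2).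
    apply reach_done. unfold search_found. splitall; auto.
    exists js, kk2. splitall; auto; lia.
Qed.

Definition round_done i j kk m c' : Prop :=
  pc c' = 15%nat /\ lambda_stored (S i) (nm c') (rm c') /\
  exists js kk', regs (S i) js kk' (nr c') (rr c') /\ pointers_ok i js kk' /\
    (j <= js)%nat /\ (kk <= kk')%nat /\
    (forall j', (i <= j' < js)%nat -> tail_dominates d n i j') /\
    (m <= 40 * (js - j) + 10 * (kk' - kk) + 60)%nat.

Lemma round_body_spec i j kk n1 r1 n2 r2 :
  regs i j kk n1 r1 -> pointers_ok i j kk ->
  (forall j', (i <= j' < j)%nat -> tail_dominates d n i j') -> lambda_stored i n2 r2 ->
  reach prog d (Config 22 n1 r1 n2 r2) (round_done i j kk).
Proof.
  intros Hregs Hptr HT Hst.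
  eapply reach_trans; [apply (search_loop_spec i (n - j) j kk); auto|].
  intros m [p' n1' r1' n2' r2']
    (Hn & Hr & Hp & js & kk' & Hregs' & Hptr' & Hjs & Hkk' & HB & HA & HT' & Hsteps).
  cbn [pc nr rr nm rm] in *. subst p' n2' r2'.
  pose proof Hregs' as (H0&H1&H2&H3&H4&R0&R1&R2&R3).
  pose proof Hptr' as (Hijs&Hjsn&Hkkjs&Hmid).
  exec_step.
  - assert (E : js = i) by lia. rewrite E in *.
    destruct (lambda_eq_cycle_max d n metric i (r1' 8%nat) ltac:(lia) HB HA) as [L1 L2].
    do 7 exec_step. apply reach_done. unfold round_done. cbn [pc nr rr nm rm].
    rewrite H1, H2, <- L1. splitall; auto.
    + apply lambda_stored_succ; [auto | lia | congruence].
    + exists i, kk'. rewrite H4, R0, Nat.add_1_r, <- prefix_succ by lia.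
      splitall; auto; try lia. unfold regs; simpl_upd. splitall; auto.
  - destruct (lambda_eq_min d n metric i js (r1' 8%nat) ltac:(lia) ltac:(lia) HB HA HT')
      as (L1 & L2 & L3).
    assert (EA : d i (js - 1)%nat + prefix d n - (prefix d js - d (js - 1)%nat js) =
                 tail_dist d n i (js - 1)).
    { pose proof (prefix_succ d (js - 1) ltac:(lia)) as HS.
      replace (S (js - 1)) with js in HS by lia. unfold tail_dist. lra. }
    do 7 exec_step; rewrite ?H1, ?H2, ?H4, ?R1, ?R3, ?Nat.add_1_r, ?EA in *.
    + rewrite Rmin_left in L1 by lra.
      do 7 exec_step. apply reach_done. unfold round_done, regs. cbn [pc nr rr nm rm].
      rewrite H1, H2, <- L1. splitall; simpl_upd; auto; try lia.
      * apply lambda_stored_succ; [auto | lia | congruence].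
      * exists js, kk'. rewrite H4, R0, Nat.add_1_r, <- prefix_succ by lia.
        splitall; simpl_upd; auto; lia.
    + rewrite Rmin_right in L1 by lra.
      do 8 exec_step. apply reach_done. unfold round_done, regs. cbn [pc nr rr nm rm].
      rewrite H1, <- L1. splitall; simpl_upd; auto; try lia.
      * apply lambda_stored_succ; [auto | lia | congruence].
      * exists js, kk'. rewrite H4, R0, Nat.add_1_r, <- prefix_succ by lia.
        splitall; simpl_upd; auto; lia.
Qed.

Definition outer_inv i j kk : Prop :=
  (i <= S j)%nat /\ (j <= n)%nat /\ (1 <= kk <= j)%nat /\
  ((i <= j)%nat -> prefix d kk + prefix d kk <= antipode2 d i j) /\
  (forall j', (i <= j' < j)%nat -> tail_dominates d n i j').

Lemma outer_inv_succ i j kk : pointers_ok i j kk ->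
  (forall j', (i <= j' < j)%nat -> tail_dominates d n i j') -> outer_inv (S i) j kk.
Proof.
  intros (Hij & Hjn & Hkk & Hmid) HT. unfold outer_inv. splitall; try lia.
  - intros. pose proof (antipode2_succ_l d n metric i j ltac:(lia) ltac:(lia)). lra.
  - intros j' Hj'. apply (tail_dominates_shift d n metric i); [lia | lia | apply HT; lia].
Qed.

Definition round_post i j kk m c' : Prop :=
  pc c' = 15%nat /\ lambda_stored (S i) (nm c') (rm c') /\
  exists js kk', regs (S i) js kk' (nr c') (rr c') /\ outer_inv (S i) js kk' /\
    (j <= js)%nat /\ (kk <= kk')%nat /\ (m <= 40 * (js - j) + 10 * (kk' - kk) + 70)%nat.

Lemma round_post_of_done i j j0 kk m m0 c' : (j <= j0)%nat ->
  (m <= m0 + 10)%nat -> round_done i j0 kk m0 c' -> round_post i j kk m c'.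
Proof.
  intros Hj0 Hm0 (Hp & Hst & js & kk' & Hregs & Hptr & Hjs & Hkk & HT & Hs).
  unfold round_post. splitall; auto. exists js, kk'.
  splitall; try lia; auto. apply outer_inv_succ; auto.
Qed.

Lemma round_spec i j kk n1 r1 n2 r2 :
  (1 <= i <= n)%nat -> regs i j kk n1 r1 -> outer_inv i j kk -> lambda_stored i n2 r2 ->
  reach prog d (Config 15 n1 r1 n2 r2) (round_post i j kk).
Proof.
  intros Hi Hregs (Hij & Hjn & Hkk & Hmid & HT) Hst.
  pose proof Hregs as (H0&H1&H2&H3&H4&R0&R1&R2&R3).
  exec_step; [|lia]. exec_step; rewrite H1, H2 in *.
  - eapply reach_mono.
    { apply (round_body_spec i j kk); auto. unfold pointers_ok. splitall; auto; lia. }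
    intros m c'. apply (round_post_of_done i j j kk); lia.
  - assert (Hj : j = (i - 1)%nat) by lia.
    do 4 exec_step. eapply reach_mono.
    { apply (round_body_spec i (S j) kk); auto.
      - unfold regs. simpl_upd. rewrite H2, H4, R1, Nat.add_1_r, prefix_succ by lia. splitall; auto.
      - unfold pointers_ok. replace (S j) with i by lia. splitall; try lia.
        apply (antipode2_diag_ge d n metric); lia.
      - intros; lia. }
    intros m c'. apply (round_post_of_done i j (S j) kk); lia.
Qed.

Lemma outer_loop_spec : forall k i j kk n1 r1 n2 r2,
  k = (S n - i)%nat -> (1 <= i <= S n)%nat -> n1 0%nat = n -> n1 1%nat = i ->
  ((i <= n)%nat -> regs i j kk n1 r1 /\ outer_inv i j kk) -> lambda_stored i n2 r2 ->
  reach prog d (Config 15 n1 r1 n2 r2) (fun m c' => step prog d c' = None /\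
    (m <= 100 * k + 40 * (n - j) + 10 * (n - kk) + 1)%nat /\ lambda_stored (S n) (nm c') (rm c')).
Proof.
  induction k; intros i j kk n1 r1 n2 r2 Hk Hi H0 H1 Hinv Hst.
  - exec_step; [lia|]. apply reach_done. splitall; [reflexivity | lia |].
    replace (S n) with i by lia. auto.
  - destruct Hinv as [Hregs Hinv]; [lia|].
    pose proof Hinv as (_ & Hjn & Hkk & _).
    eapply reach_trans; [apply (round_spec i j kk); auto; lia|].
    intros m [p' n1' r1' n2' r2'] (Hp & Hst' & js & kk' & Hregs' & Hinv' & Hjs & Hkk' & Hs).
    cbn [pc nr rr nm rm] in *. subst p'.
    pose proof Hregs' as (H0' & H1' & _). pose proof Hinv' as (_ & Hjsn & Hkkjs & _).
    eapply reach_mono; [apply (IHk (S i) js kk'); auto; lia|].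
    intros m2 c2 (Hhalt & Hs2 & Hst2). splitall; auto; lia.
Qed.

Lemma prog_correct : reach prog d (init n) (fun m c' => step prog d c' = None /\
  (m <= 160 * n + 20)%nat /\ lambda_stored (S n) (nm c') (rm c')).
Proof.
  unfold init. do 3 exec_step. eapply reach_trans.
  { apply (prefix_loop_spec (Nat.max n 1 - 1) 1); simpl_upd; auto; lia. }
  intros m [p' n1 r1 n2 r2] (Hp & Hs & H0 & H4 & R3). cbn [pc nr rr nm rm] in *. subst p'.
  do 6 exec_step. eapply reach_mono.
  { apply (outer_loop_spec n 1 1 1); simpl_upd; auto; try lia.
    - intros Hn. unfold regs, outer_inv. splitall; auto; try lia.
      intros. apply (antipode2_diag_ge d n metric); lia.
    - intros i' Hi'; lia. }
  intros m2 c2 (Hhalt & Hs2 & Hst). splitall; auto; lia.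
Qed.

End Correctness.

Theorem lemma1 :
  exists (P : list instr) (C : nat),
    forall (n : nat) (d : nat -> nat -> R),
      metric_on d n ->
      exists cf : config,
        run P d (C * n + C)%nat (init n) = Some cf /\
        forall i : nat, (1 <= i <= n)%nat ->
          rm cf i = lambda d n i /\
          (i <= nm cf i <= n)%nat /\
          ecc d n i (nm cf i) = lambda d n i.
Proof.
  exists prog, 200%nat. intros n d Hm.
  destruct (prog_correct d n Hm) as (m & cf & Hexec & Hhalt & Hsteps & Hst).
  exists cf. split.
  - replace (200 * n + 200)%nat with (m + (200 * n + 200 - m))%nat by lia.
    rewrite (run_exec _ _ _ _ _ _ Hexec). apply run_halted; auto.
  - intros i Hi. apply Hst. lia.
Qed.
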